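(* Let $q\ge1$ and $t$ be integers with $0\le t<q$, and let $\mathcal{C}_{q,t}^{\mathrm{base}}=\bigcup_{i=0}^{\lfloor (q-t-1)/(t+1)\rfloor}\mathcal{S}_{q-t-i(t+1)}^q.$ If $q\equiv 0\pmod{t+1}$, then $\big(\mathcal{S}_{\mathrm{ins}}^t(\mathcal{C}_{q,t}^{\mathrm{base}})\big)_1$ is an optimal $t$-tail-deletion-correcting code, i.e. it is $t$-tail-deletion-correcting and $\mathsf{DEL}_{\mathrm{cor}}(q,t)=\big|\big(\mathcal{S}_{\mathrm{ins}}^t(\mathcal{C}_{q,t}^{\mathrm{base}})\big)_1\big|=|\mathcal{C}_{q,t}^{\mathrm{base}}|.$ If $q\not\equiv 0\pmod{t+1}$, then $\big(\mathcal{S}_{\mathrm{ins}}^t(\mathcal{C}_{q,t}^{\mathrm{base}})\big)_1\cup\mathcal{S}_1^q$ is an optimal $t$-tail-deletion-correcting code, i.e. it is $t$-tail-deletion-correcting and $\mathsf{DEL}_{\mathrm{cor}}(q,t)=|\mathcal{C}_{q,t}^{\mathrm{base}}|+q.$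
   Context: Let $[q]=\{0,1,\dots,q-1\}$. For $1\le m\le q$, a partial permutation of length $m$ over $[q]$ is a sequence $\pi=(\pi_1,\dots,\pi_m)$ of $m$ pairwise distinct elements of $[q]$; $|\pi|=m$. Let $\mathcal{S}_m^q$ be the set of those of length $m$ (so $\mathcal{S}_1^q$ consists of the $q$ single-symbol sequences) and $\mathcal{S}_{\mathrm{all}}^q=\bigcup_{m=1}^{q}\mathcal{S}_m^q$. A code is any subset of $\mathcal{S}_{\mathrm{all}}^q$. Juxtaposition $\omega\pi$ denotes concatenation with $\omega$ on the left. For $\pi$ of length $m$ and integer $j\ge 0$, $\pi_{\downarrow j}=(\pi_{k+1},\dots,\pi_m)$ with $k=\min(j,m-1)$ (leftmost symbols are deleted; the last symbol is never deleted); $\mathcal{B}_{\mathrm{del}}^t(\pi)=\{\pi_{\downarrow j}:0\le j\le t\}$. A code $\mathcal{C}$ is $t$-tail-deletion-correcting if $\mathcal{B}_{\mathrm{del}}^t(\pi_1)\cap\mathcal{B}_{\mathrm{del}}^t(\pi_2)=\emptyset$ for all distinct $\pi_1,\pi_2\in\mathcal{C}$; $\mathsf{DEL}_{\mathrm{cor}}(q,t)$ is the maximum size of such a code in $\mathcal{S}_{\mathrm{all}}^q$. For $\pi\in\mathcal{S}_{\mathrm{all}}^q$, $\mathcal{S}_{\mathrm{ins}}^t(\pi)$ is the set of all $\omega\pi\in\mathcal{S}_{\mathrm{all}}^q$ with $\omega$ a sequence of exactly $t$ elements of $[q]$ (entries of $\omega\pi$ pairwise distinct). Its elements are listed in increasing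 lexicographic order and $(\mathcal{S}_{\mathrm{ins}}^t(\pi))_1$ denotes the first one. For a code $\mathcal{C}$, $(\mathcal{S}_{\mathrm{ins}}^t(\mathcal{C}))_1=\{(\mathcal{S}_{\mathrm{ins}}^t(\pi))_1:\pi\in\mathcal{C}\}$. *)

From mathcomp Require Import all_boot.
Set Implicit Arguments. Unset Strict Implicit. Unset Printing Implicit Defensive.

Definition pp_enum (q : nat) : seq (seq 'I_q) :=
  [seq s <- flatten [seq [seq tval w | w : m.-tuple 'I_q] | m <- iota 1 q]
   | uniq s].

Definition PP (q : nat) : Type := seq_sub (pp_enum q).

Definition S_len (q m : nat) : {set PP q} := [set p : PP q | size (val p) == m].

Definition del_tail {q} (j : nat) (p : seq 'I_q) : seq 'I_q :=
  drop (minn j (size p).-1) p.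

Definition ball_del {q} (t : nat) (p : seq 'I_q) : seq (seq 'I_q) :=
  [seq del_tail j p | j <- iota 0 t.+1].

Definition tdc {q} (t : nat) (C : {set PP q}) : bool :=
  [forall p1 in C, forall p2 in C,
     (p1 != p2) ==> ~~ has (fun s => s \in ball_del t (val p2)) (ball_del t (val p1))].

Definition DEL_cor (q t : nat) : nat := \max_(C : {set PP q} | tdc t C) #|C|.

Definition S_ins {q} (t : nat) (p : PP q) : {set PP q} :=
  [set x : PP q | [exists w : t.-tuple 'I_q, val x == tval w ++ val p]].

Fixpoint lex_le (s1 s2 : seq nat) : bool :=
  match s1, s2 with
  | [::], _ => true
  | _ :: _, [::] => false
  | x :: s, y :: s' => (x < y) || ((x == y) && lex_le s s')
  end.

Definition lexle {q} (x y : PP q) : bool :=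
  lex_le (map val (val x)) (map val (val y)).

Definition is_first_ins {q} (t : nat) (p x : PP q) : bool :=
  (x \in S_ins t p) && [forall y in S_ins t p, lexle x y].

Definition ins_first {q} (t : nat) (C : {set PP q}) : {set PP q} :=
  [set x : PP q | [exists p in C, is_first_ins t p x]].

Definition C_base (q t : nat) : {set PP q} :=
  [set p : PP q | [exists i : 'I_((q - t - 1) %/ t.+1).+1,
                    size (val p) == q - t - i * t.+1]].

From mathcomp Require Import all_boot zify.
Set Implicit Arguments. Unset Strict Implicit.

(* The t-ball of a word of length n consists of its suffixes of lengths
   max(1, n - t), ..., n.  The words of (S_ins^t(C_base))_1 have lengths
   q - i(t+1); two of them with intersecting balls therefore have the same
   length, hence the same base word (their last n - t symbols), hence coincide.
   Conversely, in a t-tail-deletion-correcting code distinct words have disjoint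
   balls, so mapping each word of length n to its suffix whose length is the
   largest element of q - t - (t+1)N not exceeding n (which is >= n - t), or to
   its last symbol if that element is not positive, is injective.  The image lies
   in C_base, and in S_1 only in the second case, which forces t + 1 not to
   divide q. *)

Lemma eq_of_mod_close d a b : a = b %[mod d.+1] -> a <= b + d -> b <= a + d -> a = b.
Proof.
wlog le_ab : a b / a <= b => [wlog_ab|/eqP + _ le_b].
  by case: (leqP a b) => [|/ltnW] le; [|symmetry]; apply: wlog_ab.
rewrite eq_sym eqn_mod_dvd // => /dvdn_leq; case: posnP => [|_ /(_ isT)]; lia.
Qed.

Section PartialPermutations.

Variables q t : nat.
Implicit Types (p x y : PP q) (s w : seq 'I_q) (C D : {set PP q}).

Lemma mem_pp_enum s : (s \in pp_enum q) = [&& uniq s, 0 < size s & size s <= q].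
Proof.
rewrite /pp_enum mem_filter; case: (boolP (uniq s)) => //= _.
apply/flatten_mapP/idP => [[m]|/andP[s_gt0 s_le]].
  by rewrite mem_iota => /andP[m_gt0 m_le] /imageP[w _ ->]; rewrite size_tuple; lia.
exists (size s); first by rewrite mem_iota; lia.
exact: (@image_f _ _ (fun w : (size s).-tuple 'I_q => tval w) _ (in_tuple s)).
Qed.

Lemma pp_valP p : [&& uniq (val p), 0 < size (val p) & size (val p) <= q].
Proof. by rewrite -mem_pp_enum; apply: ssvalP. Qed.

Lemma size_pp_gt0 p : 0 < size (val p).
Proof. by case/and3P: (pp_valP p). Qed.

Lemma size_pp_le p : size (val p) <= q.
Proof. by case/and3P: (pp_valP p). Qed.

Lemma drop_pp p k : k < size (val p) -> drop k (val p) \in pp_enum q.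
Proof.
case/and3P: (pp_valP p) => p_uniq _ p_le k_lt.
by rewrite mem_pp_enum drop_uniq // size_drop subn_gt0 k_lt (leq_trans (leq_subr _ _)).
Qed.

Lemma card_S_len1 : #|S_len q 1| = q.
Proof.
have pp1 (a : 'I_q) : [:: a] \in pp_enum q by rewrite mem_pp_enum /=; have := ltn_ord a; lia.
have -> : S_len q 1 = [set SeqSub (pp1 a) | a in 'I_q].
  apply/setP => p; rewrite inE; apply/eqP/imsetP => [|[a _ ->] //].
  by case Ep: (val p) => [|a []] // _; exists a => //; apply: val_inj; rewrite Ep.
by rewrite card_imset ?card_ord // => a b [].
Qed.

Lemma ball_delP s w : s \in ball_del t w -> exists2 j, j <= t & s = del_tail j w.
Proof. by case/mapP => j; rewrite mem_iota => /andP[_ j_le] ->; exists j. Qed.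

Lemma drop_in_ball_del k w : k <= t -> k < size w -> drop k w \in ball_del t w.
Proof.
move=> k_le k_lt; apply/mapP; exists k; first by rewrite mem_iota; lia.
by rewrite /del_tail; congr drop; lia.
Qed.

Lemma size_ball_del s w : s \in ball_del t w -> size w - t <= size s <= size w.
Proof. by case/ball_delP => j j_le ->; rewrite size_drop; lia. Qed.

Lemma drop_ball_del s w : s \in ball_del t w -> drop (size s - (size w - t)) s = drop t w.
Proof.
case/ball_delP => j j_le ->; rewrite drop_drop size_drop.
case: (leqP (size w) t) => [w_le|w_gt]; last by congr drop; lia.
by rewrite !drop_oversize //; lia.
Qed.

Lemma ball_del_size1 s w : size w = 1 -> s \in ball_del t w -> s = w.
Proof. by move=> w1 /ball_delP[j _ ->]; rewrite /del_tail w1 minn0 drop0. Qed.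

Lemma tdcP C :
  reflect (forall x y s, x \in C -> y \in C ->
             s \in ball_del t (val x) -> s \in ball_del t (val y) -> x = y)
          (tdc t C).
Proof.
apply: (iffP forall_inP) => [tdcC x y s xC yC sx sy | tdcC x xC].
  apply/eqP/negPn/negP => xy.
  by move: (implyP (forall_inP (tdcC x xC) y yC) xy) => /hasPn /(_ s sx); rewrite sy.
apply/forall_inP => y yC; apply/implyP => xy; apply/hasPn => s sx; apply/negP => sy.
by rewrite (tdcC x y s) ?eqxx in xy.
Qed.

Lemma tdc_setU_S_len1 C :
  tdc t C -> {in C, forall x, t.+1 < size (val x)} -> tdc t (C :|: S_len q 1).
Proof.
move=> /tdcP tdcC C_long.
have apart x y s : x \in C -> y \in S_len q 1 ->
    s \in ball_del t (val x) -> s \in ball_del t (val y) -> False.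
  rewrite inE => /C_long x_long /eqP y1 /size_ball_del sx /(ball_del_size1 y1) sy.
  by move: sx x_long; rewrite sy y1; set n := size (val x); lia.
apply/tdcP => x y s; rewrite !in_setU => /orP[xC|x1] /orP[yC|y1] sx sy.
- exact: tdcC sx sy.
- by case: (apart x y s xC y1 sx sy).
- by case: (apart y x s yC x1 sy sx).
apply: val_inj; move: x1 y1; rewrite !inE => /eqP x1 /eqP y1.
by rewrite -(ball_del_size1 x1 sx) -(ball_del_size1 y1 sy).
Qed.

Lemma DEL_cor_ge C : tdc t C -> #|C| <= DEL_cor q t.
Proof. exact: (leq_bigmax_cond C). Qed.

Lemma DEL_cor_le D (f : PP q -> PP q) :
  (forall p, val (f p) \in ball_del t (val p)) -> (forall p, f p \in D) ->
  DEL_cor q t <= #|D|.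
Proof.
move=> f_ball f_D; apply/bigmax_leqP => C /tdcP tdcC.
have f_inj : {in C &, injective f}.
  by move=> p1 p2 p1C p2C f12; apply: (tdcC _ _ _ p1C p2C (f_ball p1)); rewrite f12.
rewrite -(card_in_imset f_inj); apply/subset_leq_card/subsetP => _ /imsetP[p _ ->].
exact: f_D.
Qed.

End PartialPermutations.

Lemma lex_le_total s1 s2 : lex_le s1 s2 || lex_le s2 s1.
Proof.
elim: s1 s2 => [|x s1 IH] [|y s2] //=.
by case: (ltngtP x y) => //= <-; rewrite eqxx.
Qed.

Lemma lex_le_trans : transitive lex_le.
Proof.
move=> s2 s1 s3; elim: s1 s2 s3 => [|x s1 IH] [|y s2] [|z s3] //=.
case/orP=> [lt_xy|/andP[/eqP <- le12]] /orP[lt_yz|/andP[/eqP <- le23]].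
- by rewrite (ltn_trans lt_xy lt_yz).
- by rewrite lt_xy.
- by rewrite lt_yz.
- by rewrite eqxx (IH _ _ le12 le23) orbT.
Qed.

Lemma lex_le_anti : antisymmetric lex_le.
Proof.
elim=> [|x s1 IH] [|y s2] //=.
by case: (ltngtP x y) => //= <- /IH ->.
Qed.

Section FirstInsertion.

Variables q t : nat.
Implicit Types (p x y : PP q) (C : {set PP q}).

Lemma lexle_total : total (@lexle q).
Proof. by move=> x y; apply: lex_le_total. Qed.

Lemma lexle_trans : transitive (@lexle q).
Proof. by move=> y x z; apply: lex_le_trans. Qed.

Lemma lexle_anti : antisymmetric (@lexle q).
Proof. by move=> x y /lex_le_anti /(inj_map val_inj) /val_inj. Qed.

Lemma exists_lexle_min (A : {set PP q}) x0 :
  x0 \in A -> exists2 x, x \in A & {in A, forall y, lexle x y}.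
Proof.
have mem_sorted y : (y \in sort lexle (enum A)) = (y \in A) by rewrite mem_sort mem_enum.
case Es: (sort lexle (enum A)) mem_sorted (sort_sorted lexle_total (enum A)) => [|x s] mem_s.
  by rewrite -mem_s.
move=> /(order_path_min lexle_trans) /allP x_min; exists x; first by rewrite -mem_s mem_head.
move=> y; rewrite -mem_s inE => /predU1P[->|]; last exact: x_min.
by have := lexle_total x x; rewrite orbb.
Qed.

Lemma drop_S_ins p x : x \in S_ins t p -> drop t (val x) = val p.
Proof. by rewrite inE => /existsP[w /eqP ->]; rewrite drop_size_cat ?size_tuple. Qed.

Lemma size_S_ins p x : x \in S_ins t p -> size (val x) = t + size (val p).
Proof. by rewrite inE => /existsP[w /eqP ->]; rewrite size_cat size_tuple. Qed.

Lemma exists_S_ins p : t + size (val p) <= q -> exists x, x \in S_ins t p.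
Proof.
move=> p_short; set unused := [seq a <- enum 'I_q | a \notin val p].
have unused_t : t <= size unused.
  have: size (enum 'I_q) <= size (unused ++ val p).
    apply: uniq_leq_size => [|a _]; first exact: enum_uniq.
    by rewrite mem_cat mem_filter mem_enum andbT orNb.
  by rewrite size_enum_ord size_cat; lia.
have w_t : size (take t unused) == t by rewrite size_takel.
have wp_pp : tval (Tuple w_t) ++ val p \in pp_enum q.
  case/and3P: (pp_valP p) => p_uniq p_gt0 _.
  rewrite mem_pp_enum cat_uniq size_cat size_takel // p_uniq p_short addn_gt0 p_gt0.
  have unused_uniq : uniq unused by apply: filter_uniq; apply: enum_uniq.
  rewrite take_uniq //= orbT !andbT.
  by apply/hasPn => a ap; apply: contraL ap => /mem_take; rewrite mem_filter => /andP[].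
by exists (SeqSub wp_pp); rewrite inE; apply/existsP; exists (Tuple w_t).
Qed.

Lemma exists_first_ins p : t + size (val p) <= q -> exists x, is_first_ins t p x.
Proof.
case/exists_S_ins => x0 /exists_lexle_min[x xS x_min].
by exists x; rewrite /is_first_ins xS; apply/forall_inP.
Qed.

Lemma first_ins_unique p x y : is_first_ins t p x -> is_first_ins t p y -> x = y.
Proof.
case/andP=> xS /forall_inP x_min /andP[yS /forall_inP y_min].
by apply: lexle_anti; rewrite x_min ?y_min.
Qed.

Definition first_ins p : PP q := odflt p [pick x | is_first_ins t p x].

Lemma first_insP p : t + size (val p) <= q -> is_first_ins t p (first_ins p).
Proof.
rewrite /first_ins; case: pickP => [x //|no_first].
by case/exists_first_ins => x; rewrite no_first.
Qed.

Lemma ins_firstP C x :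
  reflect (exists2 p, p \in C & is_first_ins t p x) (x \in ins_first t C).
Proof. by rewrite inE; apply: exists_inP. Qed.

Lemma card_ins_first C :
  {in C, forall p, t + size (val p) <= q} -> #|ins_first t C| = #|C|.
Proof.
move=> C_short.
have -> : ins_first t C = first_ins @: C.
  apply/setP => x; apply/ins_firstP/imsetP => [[p pC px]|[p pC ->]]; exists p => //.
  - exact: first_ins_unique px (first_insP (C_short p pC)).
  - exact: first_insP (C_short p pC).
apply: card_in_imset => p p' pC p'C eq_first; apply: val_inj.
have /andP[pS _] := first_insP (C_short p pC).
have /andP[p'S _] := first_insP (C_short p' p'C).
by rewrite -(drop_S_ins pS) -(drop_S_ins p'S) eq_first.
Qed.

Lemma tdc_ins_first C :
  {in C &, forall p p', size (val p) = size (val p') %[mod t.+1]} -> tdc t (ins_first t C).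
Proof.
move=> C_mod; apply/tdcP => x y s /ins_firstP[p pC px] /ins_firstP[p' p'C p'y] sx sy.
have /andP[xS _] := px; have /andP[yS _] := p'y.
have eq_size : size (val x) = size (val y).
  have := size_ball_del sx; have := size_ball_del sy.
  set n := size (val x); set n' := size (val y) => n'_s n_s.
  apply: (@eq_of_mod_close t); [rewrite /n /n' | lia | lia].
  by rewrite (size_S_ins xS) (size_S_ins yS) -modnDmr (C_mod p p') // modnDmr.
have eq_base : p = p'.
  apply: val_inj; rewrite -(drop_S_ins xS) -(drop_S_ins yS).
  by rewrite -(drop_ball_del sx) -(drop_ball_del sy) eq_size.
by rewrite eq_base in px; apply: first_ins_unique px p'y.
Qed.

End FirstInsertion.

Section BaseCode.

Variables q t : nat.
Implicit Types (p x : PP q).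

Lemma mem_C_base p :
  (p \in C_base q t) = (size (val p) <= q - t) && (t.+1 %| q - t - size (val p)).
Proof.
have := size_pp_gt0 p; rewrite inE; set n := size (val p) => n_gt0.
apply/existsP/andP => [[i /eqP ->]|[n_le /dvdnP[i Ei]]].
  have := ltn_ord i; rewrite ltnS leq_divRL // => i_le.
  by split; [lia | apply/dvdnP; exists i; lia].
have i_lt : i < ((q - t - 1) %/ t.+1).+1 by rewrite ltnS leq_divRL //; lia.
by exists (Ordinal i_lt); apply/eqP => /=; lia.
Qed.

Lemma C_base_mod : {in C_base q t &, forall p p', size (val p) = size (val p') %[mod t.+1]}.
Proof.
have base_mod p : p \in C_base q t -> q - t = size (val p) %[mod t.+1].
  by rewrite mem_C_base => /andP[p_le p_dvd]; apply/eqP; rewrite eqn_mod_dvd.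
by move=> p p' /base_mod <- /base_mod <-.
Qed.

Lemma C_base_short : {in C_base q t, forall p, t + size (val p) <= q}.
Proof.
move=> p; have := size_pp_gt0 p; rewrite mem_C_base.
by set n := size (val p) => n_gt0 /andP[n_le _]; lia.
Qed.

Lemma ins_first_C_base_long :
  ~~ (t.+1 %| q) -> {in ins_first t (C_base q t), forall x, t.+1 < size (val x)}.
Proof.
move=> q_ndvd x /ins_firstP[p pC /andP[xS _]]; rewrite (size_S_ins xS).
suff : size (val p) != 1 by have := size_pp_gt0 p; set n := size (val p); lia.
apply: contraNneq q_ndvd => p1; move: pC; rewrite mem_C_base p1 => /andP[le_q dvd_q].
have -> : q = q - t - 1 + t.+1 by lia.
exact: dvdn_add dvd_q (dvdnn _).
Qed.

(* The largest length not exceeding m that is congruent to q - t modulo t + 1,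
   or 0 if there is no positive such length. *)
Definition base_floor m := q - t - (q - m) %/ t.+1 * t.+1.

Lemma base_floor_window m : m <= q -> m - t <= base_floor m <= m.
Proof.
move=> m_le; rewrite /base_floor.
have := divn_eq (q - m) t.+1; have := ltn_pmod (q - m) (ltn0Sn t).
by move: (_ %/ _ * _) (_ %% _) => a r; lia.
Qed.

Lemma base_floor_gt0 m : t.+1 %| q -> 0 < m <= q -> 0 < base_floor m.
Proof.
case/dvdnP=> k q_k /andP[m_gt0 m_le]; rewrite /base_floor.
have a_lt : (q - m) %/ t.+1 < k by rewrite ltn_divLR //; lia.
have : ((q - m) %/ t.+1).+1 * t.+1 <= k * t.+1 by rewrite leq_mul2r a_lt orbT.
by rewrite mulSn; lia.
Qed.

Definition base_suffix p : PP q :=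
  insubd p (drop (size (val p) - maxn 1 (base_floor (size (val p)))) (val p)).

Lemma val_base_suffix p :
  val (base_suffix p) = drop (size (val p) - maxn 1 (base_floor (size (val p)))) (val p).
Proof.
rewrite /base_suffix insubdK // drop_pp //.
have := base_floor_window (size_pp_le p); have := size_pp_gt0 p.
by set n := size (val p); set b := base_floor n; lia.
Qed.

Lemma size_base_suffix p :
  size (val (base_suffix p)) = maxn 1 (base_floor (size (val p))).
Proof.
rewrite val_base_suffix size_drop.
have := base_floor_window (size_pp_le p); have := size_pp_gt0 p.
by set n := size (val p); set b := base_floor n; lia.
Qed.

Lemma base_suffix_in_ball p : val (base_suffix p) \in ball_del t (val p).
Proof.
rewrite val_base_suffix; apply: drop_in_ball_del;
  have := base_floor_window (size_pp_le p); have := size_pp_gt0 p;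
  set n := size (val p); set b := base_floor n; lia.
Qed.

Lemma base_suffix_C_base p : 0 < base_floor (size (val p)) -> base_suffix p \in C_base q t.
Proof.
move=> b_gt0; rewrite mem_C_base size_base_suffix (maxn_idPr b_gt0).
move: b_gt0; rewrite /base_floor; move: (_ %/ _) => a b_gt0.
by apply/andP; split; [lia | apply/dvdnP; exists a; lia].
Qed.

Lemma DEL_cor_le_C_base : t.+1 %| q -> DEL_cor q t <= #|C_base q t|.
Proof.
move=> q_dvd; apply: (DEL_cor_le base_suffix_in_ball) => p.
by apply/base_suffix_C_base/base_floor_gt0; rewrite ?size_pp_gt0 ?size_pp_le.
Qed.

Lemma DEL_cor_le_C_base_S_len1 : DEL_cor q t <= #|C_base q t :|: S_len q 1|.
Proof.
apply: (DEL_cor_le base_suffix_in_ball) => p; rewrite in_setU.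
case: (posnP (base_floor (size (val p)))) => [b0|/base_suffix_C_base -> //].
by rewrite [_ \in S_len _ _]inE size_base_suffix b0 orbT.
Qed.

End BaseCode.

Theorem mainTheorem10 (q t : nat) :
  1 <= q -> t < q ->
  (t.+1 %| q ->
     [/\ tdc t (ins_first t (C_base q t)),
         DEL_cor q t = #|ins_first t (C_base q t)|
       & #|ins_first t (C_base q t)| = #|C_base q t| ]) /\
  (~~ (t.+1 %| q) ->
     [/\ tdc t (ins_first t (C_base q t) :|: S_len q 1),
         DEL_cor q t = #|ins_first t (C_base q t) :|: S_len q 1|
       & DEL_cor q t = #|C_base q t| + q ]).
Proof.
move=> _ _; have tdc_code := tdc_ins_first (@C_base_mod q t).
have card_code := card_ins_first (@C_base_short q t).
split=> [q_dvd | q_ndvd].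
  split=> //; apply/eqP; rewrite eqn_leq DEL_cor_ge // card_code andbT.
  exact: DEL_cor_le_C_base.
have code_long := ins_first_C_base_long q_ndvd.
have card_codeU : #|ins_first t (C_base q t) :|: S_len q 1| = #|C_base q t| + q.
  rewrite cardsU card_code card_S_len1.
  suff -> : ins_first t (C_base q t) :&: S_len q 1 = set0 by rewrite cards0 subn0.
  apply/setP => x; rewrite in_setI in_set0; apply/andP => -[/code_long x_long].
  by rewrite inE => /eqP x1; rewrite x1 in x_long.
have DEL_eq : DEL_cor q t = #|C_base q t| + q.
  apply/eqP; rewrite eqn_leq -{2}card_codeU DEL_cor_ge ?tdc_setU_S_len1 // andbT.
  apply: leq_trans (DEL_cor_le_C_base_S_len1 q t) _.
  by rewrite -[X in _ <= _ + X](card_S_len1 q) leq_card_setU.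
by split; rewrite ?tdc_setU_S_len1 ?DEL_eq.
Qed.
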